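(* Let $\mathcal C\subseteq\{0,1\}^n$ and $\mathcal D\subseteq\{0,1\}^m$ be neural codes and let $\phi:R_\mathcal D\to R_\mathcal C$ be a ring homomorphism. Then $\phi$ is a neural ring homomorphism if and only if the associated code map $q_\phi:\mathcal C\to\mathcal D$ is a composition of code maps of the following types (each between neural codes): 1. Permutation of labels: for a code $\mathcal A\subseteq\{0,1\}^k$ and a permutation $\sigma$ of $[k]$, the map $\mathcal A\to\mathcal A'$, $(a_1,\dots,a_k)\mapsto(a_{\sigma(1)},\dots,a_{\sigma(k)})$, where $\mathcal A'$ is the image of $\mathcal A$; 2. Adding codewords (inclusion): for codes $\mathcal A\subseteq\mathcal A'\subseteq\{0,1\}^k$, the map $\mathcal A\to\mathcal A'$, $a\mapsto a$; 3. Deleting the last neuron: $\mathcal A\to\mathcal A'$, $(a_1,\dots,a_k)\mapsto(a_1,\dots,a_{k-1})$, where $\mathcal A'$ is the image; 4. Repeating a neuron: for some $i\in[k]$, $\mathcal A\to\mathcal A'$, $(a_1,\dots,a_k)\mapsto(a_1,\dots,a_k,a_i)$, where $\mathcal A'$ is the image; 5. Adding a trivial neuron: $\mathcal A\to\mathcal A'$, $(a_1,\dots,a_k)\mapsto(a_1,\dots,a_k,0)$ for all $a$, or $(a_1,\dots,a_k)\mapsto(a_1,\dots,a_k,1)$ for all $a$, where $\mathcal A'$ is the image.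
   Context: For a code $\mathcal C\subseteq\{0,1\}^n$, $R_\mathcal C$ is the ring of all functions $\mathcal C\to\mathbb F_2$ (equivalently $\mathbb F_2[x_1,\dots,x_n]$ modulo the ideal of polynomials vanishing on $\mathcal C$), and $R[n]=R_{\{0,1\}^n}=\mathbb F_2[x_1,\dots,x_n]/\langle x_i^2-x_i\rangle$. $R_\mathcal C$ is an $R[n]$-module via $(r\cdot f)(c)=r(c)f(c)$. For $c\in\mathcal C$, $\rho_c\in R_\mathcal C$ is the indicator function of $\{c\}$. For a ring homomorphism $\phi:R_\mathcal D\to R_\mathcal C$ and $c\in\mathcal C$ there is a unique $d\in\mathcal D$ with $\phi(\rho_d)(c)=1$; the associated code map is $q_\phi(c)=$ this $d$. A ring homomorphism $\tau:R[m]\to R[n]$ is compatible with $\phi$ if $\phi(r\cdot f)=\tau(r)\cdot\phi(f)$ for all $r\in R[m]$, $f\in R_\mathcal D$. A ring homomorphism $\tau:R[m]\to R[n]$ is linear-monomial if $\tau(x_i)\in\{x_1,\dots,x_n,0,1\}$ for every $i\in[m]$. A ring homomorphism $\phi:R_\mathcal D\to R_\mathcal C$ is a neural ring homomorphism if there exists a linear-monomial ring homomorphism $\tau:R[m]\to R[n]$ compatible with $\phi$. *)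

From HB Require Import structures.
From mathcomp Require Import all_boot all_order all_algebra all_fingroup.
Set Implicit Arguments. Unset Strict Implicit. Unset Printing Implicit Defensive.
Import GRing.Theory.
Local Open Scope ring_scope.

Notation word n := (n.-tuple bool).
Notation code n := {set word n}.

Definition csub n (C : code n) : finType := {x : word n | x \in C}.

Definition RC n (C : code n) := {ffun csub C -> 'F_2}.

Definition Rn n := {ffun word n -> 'F_2}.

Definition xvar n (i : 'I_n) : Rn n := [ffun v : word n => (tnth v i)%:R].

Definition act n (C : code n) (r : Rn n) (f : RC C) : RC C :=
  [ffun c : csub C => r (val c) * f c].

Definition rho n (C : code n) (c : csub C) : RC C :=
  [ffun c' : csub C => (c' == c)%:R].

Definition qphi n m (C : code n) (D : code m) (phi : RC D -> RC C)
  (c : csub C) : option (csub D) :=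
  [pick d : csub D | phi (rho d) c == 1].

Definition compatible n m (C : code n) (D : code m)
  (tau : Rn m -> Rn n) (phi : RC D -> RC C) : Prop :=
  forall (r : Rn m) (f : RC D), phi (act r f) = act (tau r) (phi f).

Definition linear_monomial n m (tau : Rn m -> Rn n) : Prop :=
  forall i : 'I_m, (exists j : 'I_n, tau (xvar i) = xvar j)
                   \/ tau (xvar i) = 0 \/ tau (xvar i) = 1.

Definition neural_ring_hom n m (C : code n) (D : code m)
  (phi : {rmorphism RC D -> RC C}) : Prop :=
  exists tau : {rmorphism Rn m -> Rn n},
    linear_monomial tau /\ compatible tau phi.

(* Elementary code maps, given as maps on words (only their values on the
   source code matter). *)
Definition permw k (s : 'S_k) (a : word k) : word k :=
  [tuple tnth a (s i) | i < k].
Definition dellast k (a : word k.+1) : word k :=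
  [tuple tnth a (widen_ord (leqnSn k) i) | i < k].
Definition appendw k (b : bool) (a : word k) : word k.+1 :=
  [tuple (if (i < k)%N then nth false a i else b) | i < k.+1].
Definition repeatw k (j : 'I_k) (a : word k) : word k.+1 := appendw (tnth a j) a.

Inductive basic_map : forall k k', code k -> code k' -> (word k -> word k') -> Prop :=
| BPerm k (s : 'S_k) (A : code k) : basic_map A (permw s @: A) (permw s)
| BIncl k (A A' : code k) : A \subset A' -> basic_map A A' id
| BDel k (A : code k.+1) : basic_map A (@dellast k @: A) (@dellast k)
| BRep k (j : 'I_k) (A : code k) : basic_map A (repeatw j @: A) (repeatw j)
| BTriv k (b : bool) (A : code k) : basic_map A (appendw b @: A) (appendw b).

Inductive code_comp : forall k k', code k -> code k' -> (word k -> word k') -> Prop :=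
| CBasic k k' (A : code k) (A' : code k') f :
    basic_map A A' f -> code_comp A A' f
| CComp k1 k2 k3 (A : code k1) (B : code k2) (E : code k3) f g :
    code_comp A B f -> code_comp B E g -> code_comp A E (g \o f).

From HB Require Import structures.
From mathcomp Require Import all_boot all_order all_algebra all_fingroup.
Set Implicit Arguments. Unset Strict Implicit. Unset Printing Implicit Defensive.
Import GRing.Theory.
Local Open Scope ring_scope.

(* A ring homomorphism phi : R_D -> R_C is evaluation along its code map:
   phi f (c) = f (q_phi c).  Compatibility with a linear-monomial tau then
   says that every coordinate of q_phi is an input coordinate or a constant
   ("monomial" word map), and conversely a monomial F gives the compatible
   tau r = r o F.  Composites of elementary code maps are clearly monomial;
   conversely a monomial G is realised on a code by appending the coordinates
   of G v to v one neuron at a time (repeated or trivial neurons), rotating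
   G v to the front by a permutation, deleting the trailing neurons, and
   finally including the image of C into D. *)

Definition monomial_map k k' (G : word k -> word k') :=
  forall i : 'I_k', (exists j, forall v, tnth (G v) i = tnth v j) \/
                    (exists b, forall v, tnth (G v) i = b).

Lemma monomial_map_comp k1 k2 k3 (f : word k1 -> word k2) (g : word k2 -> word k3) :
  monomial_map f -> monomial_map g -> monomial_map (g \o f).
Proof.
move=> mf mg i; case: (mg i) => [[j gj]|[b gb]]; last by right; exists b => v /=.
case: (mf j) => [[j' fj']|[b fb]].
  by left; exists j' => v /=; rewrite gj fj'.
by right; exists b => v /=; rewrite gj fb.
Qed.

Lemma tval_inj k : injective (@tval k bool).
Proof. exact: val_inj. Qed.

Lemma appendwE k b (a : word k) : appendw b a = rcons a b :> seq bool.
Proof.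
apply: (@eq_from_nth _ false); first by rewrite size_tuple size_rcons size_tuple.
move=> i; rewrite size_tuple => lt_i_k1.
rewrite -[i]/(nat_of_ord (Ordinal lt_i_k1)) -tnth_nth tnth_mktuple /=.
rewrite nth_rcons size_tuple.
by case: ltnP => // le_k_i; rewrite eqn_leq le_k_i -ltnS lt_i_k1.
Qed.

Lemma tnth_appendw k b (a : word k) (i : 'I_k.+1) :
  tnth (appendw b a) i = if (i < k)%N then nth false a i else b.
Proof. exact: tnth_mktuple. Qed.

Lemma dellastE k (a : word k.+1) : dellast a = take k a :> seq bool.
Proof.
apply: (@eq_from_nth _ false); first by rewrite size_tuple size_take size_tuple ltnSn.
move=> i; rewrite size_tuple => lt_i_k.
rewrite -[i]/(nat_of_ord (Ordinal lt_i_k)) -tnth_nth tnth_mktuple nth_take //.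
by rewrite (tnth_nth false).
Qed.

Lemma appendw_dellast k (a : word k.+1) : appendw (tnth a ord_max) (dellast a) = a.
Proof.
apply: tval_inj; rewrite appendwE dellastE (tnth_nth false).
rewrite -{3}(cat_take_drop k a) (drop_nth false) ?size_tuple //.
by rewrite drop_oversize ?size_tuple // cats1.
Qed.

Definition takew N m (v : word N) : word m := [tuple nth false v i | i < m].

Lemma takewE N m (v : word N) : (m <= N)%N -> takew m v = take m v :> seq bool.
Proof.
move=> le_m_N; apply: (@eq_from_nth _ false).
  by rewrite size_tuple size_take size_tuple; case: ltngtP le_m_N.
move=> i; rewrite size_tuple => lt_i_m.
by rewrite -[i]/(nat_of_ord (Ordinal lt_i_m)) -tnth_nth tnth_mktuple nth_take.
Qed.

Lemma takew_id N (v : word N) : takew N v = v.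
Proof. by apply: tval_inj; rewrite takewE // take_oversize // size_tuple. Qed.

Lemma takew_dellast N m (v : word N.+1) : (m <= N)%N -> takew m (dellast v) = takew m v.
Proof.
move=> le_m_N; apply: tval_inj.
by rewrite !takewE ?dellastE ?take_takel // (leq_trans le_m_N).
Qed.

Lemma exists_permw_rot N k :
  exists s : 'S_N, forall a : word N, permw s a = rot k a :> seq bool.
Proof.
have /tuple_permP[s rot_ord] : perm_eq (rot k (ord_tuple N)) (ord_tuple N).
  by rewrite perm_rot.
exists s => a; rewrite -[in RHS](map_tnth_enum a) -map_rot.
have -> : rot k (enum 'I_N) = map s (enum 'I_N).
  by rewrite -val_ord_tuple rot_ord /=; apply: eq_map => i; rewrite tnth_ord_tuple.
by rewrite -map_comp.
Qed.

Lemma monomial_dellast k : monomial_map (@dellast k).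
Proof. by move=> i; left; exists (widen_ord (leqnSn k) i) => v; rewrite tnth_mktuple. Qed.

Lemma monomial_appendw k b : monomial_map (@appendw k b).
Proof.
move=> i; case: (ltnP i k) => [lt_i_k | le_k_i].
  by left; exists (Ordinal lt_i_k) => v; rewrite tnth_appendw lt_i_k (tnth_nth false).
by right; exists b => v; rewrite tnth_appendw ltnNge le_k_i.
Qed.

Lemma monomial_repeatw k (j : 'I_k) : monomial_map (repeatw j).
Proof.
move=> i; left; case: (ltnP i k) => [lt_i_k | le_k_i].
  by exists (Ordinal lt_i_k) => v; rewrite tnth_appendw lt_i_k (tnth_nth false).
by exists j => v; rewrite tnth_appendw ltnNge le_k_i.
Qed.

Lemma monomial_permw k (s : 'S_k) : monomial_map (permw s).
Proof. by move=> i; left; exists (s i) => v; rewrite tnth_mktuple. Qed.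

Lemma basic_map_monomial k k' (A : code k) (A' : code k') f :
  basic_map A A' f -> monomial_map f.
Proof.
case=> {k' A A' f} {}k.
- by move=> s _; apply: monomial_permw.
- by move=> A A' _ i; left; exists i.
- by move=> _; apply: monomial_dellast.
- by move=> j _; apply: monomial_repeatw.
- by move=> b _; apply: monomial_appendw.
Qed.

Lemma code_comp_monomial k k' (A : code k) (A' : code k') f :
  code_comp A A' f -> monomial_map f.
Proof.
elim=> {k k' A A' f} [k k' A A' f /basic_map_monomial //|].
by move=> k1 k2 k3 A B E f g _ mf _ mg; apply: monomial_map_comp.
Qed.

(* Length m + k rather than k + m, so that for m.+1 it reduces to the length
   (m + k).+1 produced by appendw. *)
Definition graphw k m (G : word k -> word m) (v : word k) : word (m + k) :=
  tcast (addnC k m) [tuple of v ++ G v].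

Lemma graphwE k m (G : word k -> word m) v : graphw G v = v ++ G v :> seq bool.
Proof. exact: val_tcast. Qed.

Lemma tnth_graphw k m (G : word k -> word m) v (j : 'I_k) :
  tnth (graphw G v) (widen_ord (leq_addl m k) j) = tnth v j.
Proof. by rewrite !(tnth_nth false) graphwE nth_cat size_tuple /= ltn_ord. Qed.

Lemma graphw_dellast k m (G : word k -> word m.+1) v :
  appendw (tnth (G v) ord_max) (graphw (@dellast m \o G) v) = graphw G v.
Proof.
by apply: tval_inj; rewrite appendwE !graphwE rcons_cat -appendwE appendw_dellast.
Qed.

Definition realizable k k' (A : code k) (G : word k -> word k') :=
  exists2 F, code_comp A (G @: A) F & F =1 G.

Lemma realizable_id k (A : code k) : realizable A id.
Proof. by exists id => //; rewrite imset_id; apply/CBasic/BIncl. Qed.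

Lemma eq_realizable k k' (A : code k) (G1 G2 : word k -> word k') :
  G1 =1 G2 -> realizable A G1 -> realizable A G2.
Proof.
move=> eqG [F AF eqF]; exists F => [|v]; last by rewrite eqF eqG.
by rewrite -(eq_imset _ eqG).
Qed.

Lemma realizable_basic k k' k'' (A : code k) (G : word k -> word k') (f : word k' -> word k'') :
  (forall B, basic_map B (f @: B) f) -> realizable A G -> realizable A (f \o G).
Proof.
move=> bf [F AF eqF]; exists (f \o F) => [|v /=]; last by rewrite eqF.
by rewrite imset_comp; apply: CComp AF (CBasic (bf _)).
Qed.

Lemma realizable_graphw k m (A : code k) (G : word k -> word m) :
  monomial_map G -> realizable A (graphw G).
Proof.
elim: m G => [|m IH] G mG.
  apply: eq_realizable (realizable_id A) => v; apply: tval_inj.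
  by rewrite graphwE tuple0 cats0.
have /IH rG' : monomial_map (@dellast m \o G).
  exact: monomial_map_comp mG (@monomial_dellast m).
case: (mG ord_max) => [[j Gj] | [b Gb]].
- apply: eq_realizable (realizable_basic (BRep (widen_ord (leq_addl m k) j)) rG') => v /=.
  by rewrite /repeatw tnth_graphw -Gj graphw_dellast.
- apply: eq_realizable (realizable_basic (BTriv b) rG') => v /=.
  by rewrite -(Gb v) graphw_dellast.
Qed.

Lemma realizable_takew k N m (A : code k) (H : word k -> word N) :
  (m <= N)%N -> realizable A H -> realizable A (takew m \o H).
Proof.
elim: N H => [|N IH] H; rewrite leq_eqVlt => /predU1P[-> | lt_m_N] rH //.
1,2: by apply: eq_realizable rH => v /=; rewrite takew_id.
apply: eq_realizable (IH _ lt_m_N (realizable_basic (@BDel N) rH)) => v /=.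
exact: takew_dellast.
Qed.

Lemma realizable_monomial k m (A : code k) (G : word k -> word m) :
  monomial_map G -> realizable A G.
Proof.
move=> mG; have [s permw_rot] := exists_permw_rot (m + k) k.
have rG := realizable_basic (BPerm s) (realizable_graphw A mG).
apply: eq_realizable (realizable_takew (leq_addr k m) rG) => v /=.
apply: tval_inj; rewrite takewE ?leq_addr // permw_rot graphwE.
by rewrite -{1}(size_tuple v) rot_size_cat take_size_cat ?size_tuple.
Qed.

Lemma F2_cases (x : 'F_2) : x = 0 \/ x = 1.
Proof. by case: x => [[|[|x]] //] lt_x_2; [left | right]; apply: val_inj. Qed.

Lemma ffunME (aT : finType) (R : pzRingType) (f g : {ffun aT -> R}) x :
  (f * g) x = f x * g x.
Proof. by rewrite ffunE. Qed.

Lemma sum_rho m (D : code m) : \sum_d rho d = 1 :> RC D.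
Proof.
apply/ffunP=> x; rewrite sum_ffunE (bigD1 x) //= !ffunE eqxx big1 ?addr0 // => d.
by rewrite ffunE eq_sym => /negPf ->.
Qed.

Section EvaluationAtCodewords.
Variables (n m : nat) (C : code n) (D : code m) (phi : {rmorphism RC D -> RC C}).

Lemma rmorph_rho_eval c d : phi (rho d) c = 1 -> forall f, phi f c = f d.
Proof.
(* phi f c = phi (f * rho d) c, and f * rho d is either 0 or rho d. *)
move=> phi_d_c f; rewrite -[phi f c]mulr1 -phi_d_c -ffunME -rmorphM.
have [f_d | f_d] := F2_cases (f d).
- have -> : f * rho d = 0.
    by apply/ffunP=> x; rewrite !ffunE; case: eqP => [-> | _]; rewrite ?f_d ?mulr0 ?mul0r.
  by rewrite rmorph0 ffunE f_d.
- have -> : f * rho d = rho d.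
    by apply/ffunP=> x; rewrite !ffunE; case: eqP => [-> | _]; rewrite ?f_d ?mulr0 ?mul1r.
  by rewrite phi_d_c f_d.
Qed.

Lemma exists_rmorph_rho c : exists d, phi (rho d) c = 1.
Proof.
have sum_phi_rho : \sum_d phi (rho d) c = 1.
  by rewrite -sum_ffunE -rmorph_sum sum_rho rmorph1 ffunE.
case: (pickP (fun d => phi (rho d) c == 1)) => [d /eqP | no_d]; first by exists d.
suff : \sum_d phi (rho d) c = 0 by rewrite sum_phi_rho.
apply: big1 => d _; have [//|phi_d_c] := F2_cases (phi (rho d) c).
by move: (no_d d); rewrite phi_d_c.
Qed.

Lemma qphi_eval c : exists d, qphi phi c = Some d /\ forall f, phi f c = f d.
Proof.
rewrite /qphi; case: pickP => [d /eqP phi_d_c | no_d].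
  by exists d; split=> //; apply: rmorph_rho_eval.
by have [d phi_d_c] := exists_rmorph_rho c; move: (no_d d); rewrite phi_d_c eqxx.
Qed.

End EvaluationAtCodewords.

Lemma compatible_qphi n m (C : code n) (D : code m) (phi : {rmorphism RC D -> RC C})
    (tau : Rn m -> Rn n) c d :
  compatible tau phi -> qphi phi c = Some d -> forall r, tau r (val c) = r (val d).
Proof.
move=> tau_phi qphi_c r; have [d' [qphi_c' phi_c]] := qphi_eval phi c.
move: qphi_c; rewrite qphi_c' => -[<-].
have := congr1 (fun f : RC C => f c) (tau_phi r 1).
by rewrite phi_c rmorph1 !ffunE !mulr1 => ->.
Qed.

Lemma qphi_imset_subset n m (C : code n) (D : code m) (phi : {rmorphism RC D -> RC C})
    (G : word n -> word m) :
  (forall c, omap val (qphi phi c) = Some (G (val c))) -> G @: C \subset D.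
Proof.
move=> qphiG; apply/subsetP => _ /imsetP[v Cv ->].
move: (qphiG (exist _ v Cv)); case: (qphi phi _) => //= d [<-].
exact: valP.
Qed.

Section Comap.
Variables (n m : nat) (F : word n -> word m).

Definition comap (r : Rn m) : Rn n := [ffun v => r (F v)].

Fact comap_is_nmod_morphism : GRing.nmod_morphism comap.
Proof. by split=> [|r s]; apply/ffunP => v; rewrite !ffunE. Qed.
HB.instance Definition _ :=
  GRing.isNmodMorphism.Build (Rn m) (Rn n) comap comap_is_nmod_morphism.

Fact comap_is_monoid_morphism : GRing.monoid_morphism comap.
Proof. by split=> [|r s]; apply/ffunP => v; rewrite !ffunE. Qed.
HB.instance Definition _ :=
  GRing.isMonoidMorphism.Build (Rn m) (Rn n) comap comap_is_monoid_morphism.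

Lemma linear_monomial_comap : monomial_map F -> linear_monomial comap.
Proof.
move=> mF i; case: (mF i) => [[j Fj] | [[] Fb]].
- by left; exists j; apply/ffunP => v; rewrite !ffunE Fj.
- by right; right; apply/ffunP => v; rewrite !ffunE Fb.
- by right; left; apply/ffunP => v; rewrite !ffunE Fb.
Qed.

Lemma compatible_comap (C : code n) (D : code m) (phi : {rmorphism RC D -> RC C}) :
  (forall c, omap val (qphi phi c) = Some (F (val c))) -> compatible comap phi.
Proof.
move=> qphiF r f; apply/ffunP => c; have [d [qphi_c phi_c]] := qphi_eval phi c.
move: (qphiF c); rewrite qphi_c => -[F_c].
by rewrite phi_c !ffunE phi_c -F_c.
Qed.

End Comap.

Definition coordinate_map n m (tau : Rn m -> Rn n) (v : word n) : word m :=
  [tuple tau (xvar i) v == 1 | i < m].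

Lemma linear_monomial_coordinate_map n m (tau : Rn m -> Rn n) :
  linear_monomial tau -> monomial_map (coordinate_map tau).
Proof.
move=> lm_tau i; have coordE v : tnth (coordinate_map tau v) i = (tau (xvar i) v == 1).
  exact: tnth_mktuple.
case: (lm_tau i) => [[j tau_i] | [tau_i | tau_i]].
- by left; exists j => v; rewrite coordE tau_i ffunE; case: (tnth v j).
- by right; exists false => v; rewrite coordE tau_i ffunE.
- by right; exists true => v; rewrite coordE tau_i ffunE.
Qed.

Lemma compatible_coordinate_map n m (C : code n) (D : code m)
    (phi : {rmorphism RC D -> RC C}) (tau : Rn m -> Rn n) :
  compatible tau phi ->
  forall c, omap val (qphi phi c) = Some (coordinate_map tau (val c)).
Proof.
move=> tau_phi c; have [d [qphi_c _]] := qphi_eval phi c.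
rewrite qphi_c /=; congr Some; apply: eq_from_tnth => i.
by rewrite tnth_mktuple (compatible_qphi tau_phi qphi_c) ffunE; case: (tnth _ i).
Qed.

Theorem theorem4 (n m : nat) (C : code n) (D : code m)
  (phi : {rmorphism RC D -> RC C}) :
  neural_ring_hom phi <->
  exists F : word n -> word m,
    code_comp C D F /\
    forall c : csub C, omap val (qphi phi c) = Some (F (val c)).
Proof.
split=> [[tau [lm_tau tau_phi]] | [F [CF qphiF]]].
- have qphiG := compatible_coordinate_map tau_phi.
  have [F CF eqF] := realizable_monomial C (linear_monomial_coordinate_map lm_tau).
  exists (id \o F); split=> [|c]; last by rewrite qphiG /= eqF.
  exact: CComp CF (CBasic (BIncl (qphi_imset_subset qphiG))).
- exists (comap F); split; last exact: compatible_comap qphiF.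
  exact/linear_monomial_comap/code_comp_monomial/CF.
Qed.
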